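(* Let $X+_{f,g}Y$ and $Z+_{h,j}W$ be Artin–Wraith glueings of topological spaces and let $\psi:X\to Z$ and $\phi:Y\to W$ be continuous maps. Define $\psi+\phi:X+_{f,g}Y\to Z+_{h,j}W$ by $\psi$ on $X$ and $\phi$ on $Y$. Then $\psi+\phi$ is continuous if and only if $f(\psi^{-1}(A))\subseteq\phi^{-1}(h(A))$ for all $A\in\mathrm{Closed}(Z)$ and $g(\phi^{-1}(B))\subseteq\psi^{-1}(j(B))$ for all $B\in\mathrm{Closed}(W)$.
   Context: $\mathrm{Closed}(A)$ is the set of closed subsets of a space $A$. A map $f:\mathrm{Closed}(X)\to\mathrm{Closed}(Y)$ is admissible if $f(\emptyset)=\emptyset$ and $f$ preserves finite unions. An admissible pair is a pair of admissible maps $f:\mathrm{Closed}(X)\to\mathrm{Closed}(Y)$, $g:\mathrm{Closed}(Y)\to\mathrm{Closed}(X)$ with $g\circ f(A)\subseteq A$ and $f\circ g(B)\subseteq B$ for all closed $A,B$. For such a pair, $X+_{f,g}Y$ is the set $X\sqcup Y$ whose closed sets are the $D$ with $D\cap X$ closed in $X$, $D\cap Y$ closed in $Y$, $f(D\cap X)\subseteq D$, $g(D\cap Y)\subseteq D$. Similarly for $(h,j)$ and $Z+_{h,j}W$. *)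

From HB Require Import structures.
From mathcomp Require Import all_boot all_order.
From mathcomp Require Import all_classical topology.
Set Implicit Arguments. Unset Strict Implicit. Unset Printing Implicit Defensive.
Local Open Scope classical_set_scope.

(* Maps Closed(X) -> Closed(Y) are represented as functions set X -> set Y;
   only their values on closed sets matter. *)
Definition admissible (X Y : topologicalType) (f : set X -> set Y) : Prop :=
  [/\ forall A, closed A -> closed (f A),
      f set0 = set0 &
      forall A B, closed A -> closed B -> f (A `|` B) = f A `|` f B].

Definition admissible_pair (X Y : topologicalType)
  (f : set X -> set Y) (g : set Y -> set X) : Prop :=
  [/\ admissible f, admissible g,
      forall A, closed A -> g (f A) `<=` A &
      forall B, closed B -> f (g B) `<=` B].

(* The closed sets of the Artin--Wraith glueing X +_{f,g} Y, carried by X + Y. *)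
Definition glue_closed (X Y : topologicalType)
  (f : set X -> set Y) (g : set Y -> set X) (D : set (X + Y)%type) : Prop :=
  [/\ closed (inl @^-1` D : set X),
      closed (inr @^-1` D : set Y),
      f (inl @^-1` D) `<=` inr @^-1` D &
      g (inr @^-1` D) `<=` inl @^-1` D].

Definition sum_map (X Y Z W : Type) (psi : X -> Z) (phi : Y -> W)
  (s : (X + Y)%type) : (Z + W)%type :=
  match s with inl x => inl (psi x) | inr y => inr (phi y) end.

Definition glue_continuous (X Y Z W : topologicalType)
  (f : set X -> set Y) (g : set Y -> set X)
  (h : set Z -> set W) (j : set W -> set Z)
  (F : (X + Y)%type -> (Z + W)%type) : Prop :=
  forall D, glue_closed h j D -> glue_closed f g (F @^-1` D).

(* A closed set A of Z (resp. B of W) generates the closed set A + h(A)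
   (resp. j(B) + B) of the glueing Z +_{h,j} W.  Pulling these back along
   psi + phi yields the two inclusions.  Conversely, a closed set D of the
   glueing pulls back to psi^-1(D_Z) + phi^-1(D_W), whose parts are closed by
   continuity of psi and phi, and whose glueing conditions follow by chaining
   the inclusions with those of D. *)
From mathcomp Require Import all_boot all_order all_classical topology.
Set Implicit Arguments. Unset Strict Implicit. Unset Printing Implicit Defensive.
Local Open Scope classical_set_scope.

Definition sum_set (Z W : Type) (A : set Z) (B : set W) : set (Z + W)%type :=
  fun s => match s with inl z => A z | inr w => B w end.

Lemma glue_closed_sum_set (Z W : topologicalType)
    (h : set Z -> set W) (j : set W -> set Z) (A : set Z) (B : set W) :
  glue_closed h j (sum_set A B) <-> [/\ closed A, closed B, h A `<=` B & j B `<=` A].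
Proof. by []. Qed.

Section GlueingMaps.
Variables (X Y Z W : topologicalType).
Variables (f : set X -> set Y) (g : set Y -> set X).
Variables (h : set Z -> set W) (j : set W -> set Z).
Variables (psi : X -> Z) (phi : Y -> W).

Lemma glue_continuous_sum_map :
  continuous psi -> continuous phi ->
  (forall A, closed A -> f (psi @^-1` A) `<=` phi @^-1` (h A)) ->
  (forall B, closed B -> g (phi @^-1` B) `<=` psi @^-1` (j B)) ->
  glue_continuous f g h j (sum_map psi phi).
Proof.
move=> /continuous_closedP cpsi /continuous_closedP cphi fh gj D [cDZ cDW hD jD].
split; [exact: (cpsi _ cDZ) | exact: (cphi _ cDW) | |].
- by move=> y fy; apply: hD; exact: fh _ cDZ _ fy.
- by move=> x gx; apply: jD; exact: gj _ cDW _ gx.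
Qed.

Hypothesis hj : admissible_pair h j.

Lemma glue_closed_inl_hull (A : set Z) : closed A -> glue_closed h j (sum_set A (h A)).
Proof.
case: hj => -[hc _ _] _ jh _ cA.
by apply/glue_closed_sum_set; split; [| exact: hc | | exact: jh].
Qed.

Lemma glue_closed_inr_hull (B : set W) : closed B -> glue_closed h j (sum_set (j B) B).
Proof.
case: hj => _ [jc _ _] _ hjh cB.
by apply/glue_closed_sum_set; split; [exact: jc | | exact: hjh |].
Qed.

Hypothesis cont : glue_continuous f g h j (sum_map psi phi).

Lemma glue_continuous_inl_compat (A : set Z) :
  closed A -> f (psi @^-1` A) `<=` phi @^-1` (h A).
Proof. by move=> /glue_closed_inl_hull /cont []. Qed.

Lemma glue_continuous_inr_compat (B : set W) :
  closed B -> g (phi @^-1` B) `<=` psi @^-1` (j B).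
Proof. by move=> /glue_closed_inr_hull /cont []. Qed.

End GlueingMaps.

Theorem mainTheorem10 (X Y Z W : topologicalType)
  (f : set X -> set Y) (g : set Y -> set X)
  (h : set Z -> set W) (j : set W -> set Z)
  (psi : X -> Z) (phi : Y -> W) :
  admissible_pair f g -> admissible_pair h j ->
  continuous psi -> continuous phi ->
  (glue_continuous f g h j (sum_map psi phi) <->
   (forall A : set Z, closed A -> f (psi @^-1` A) `<=` phi @^-1` (h A)) /\
   (forall B : set W, closed B -> g (phi @^-1` B) `<=` psi @^-1` (j B))).
Proof.
move=> _ hj cpsi cphi; split.
- move=> cont; split.
  + exact: glue_continuous_inl_compat hj cont.
  + exact: glue_continuous_inr_compat hj cont.
- by case=> fh gj; exact: glue_continuous_sum_map.
Qed.
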